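(* Let $G_3^*$ be the set of positive integers $k$ such that every exponent occurring in the prime factorization of $k$ (i.e. $v_p(k)$ for every prime $p \mid k$) belongs to $A_3^*$, where $A_3^*$ is the set of nonnegative integers whose base-$3$ expansion contains no digit $2$. Then the upper uniform density of $G_3^*$ satisfies $\overline{u}(G_3^* ) \le 7/8$.
   Context: $A_3^*$ is the greedy set of nonnegative integers free of 3-term arithmetic progressions, and $G_3^*$ (by Rankin's characterization) is the greedy set of positive integers free of 3-term geometric progressions $a, ar, ar^2$ with integer ratio $r>1$. For $A\subseteq \mathbb{N}$, the upper uniform density is $\overline{u}(A) = \lim_{s\to\infty} \max_{n\ge 0} \frac{1}{s}\,\#\{a\in A : n < a \le n+s\}$. *)

From HB Require Import structures.
From mathcomp Require Import all_boot all_order all_algebra.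
From mathcomp Require Import all_classical all_reals all_analysis.
Set Implicit Arguments. Unset Strict Implicit. Unset Printing Implicit Defensive.
Import Order.TTheory GRing.Theory Num.Theory.
Local Open Scope classical_set_scope.
Local Open Scope ring_scope.

(* A_3^* : nonnegative integers whose base-3 expansion has no digit 2.
   The i-th base-3 digit of k is (k %/ 3^i) %% 3. *)
Definition inA3 (k : nat) : Prop := forall i : nat, ((k %/ 3 ^ i) %% 3 <> 2)%N.

Definition inG3 (k : nat) : Prop :=
  (0 < k)%N /\ forall p : nat, prime p -> (p %| k)%N -> inA3 (logn p k).

Definition window_count (A : nat -> Prop) (n s : nat) : nat :=
  (\sum_(n.+1 <= a < (n + s).+1) (`[< A a >] : nat))%N.

(* max_{n >= 0} #{ a in A : n < a <= n+s } (the max exists, the counts are <= s) *)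
Definition max_window (R : realType) (A : nat -> Prop) (s : nat) : R :=
  sup [set ((window_count A n s)%:R : R) | n in [set: nat]].

(* Upper uniform density: lim_{s -> oo} max_n (1/s) #{a in A : n < a <= n+s}.
   The limit exists (subadditivity); we take it as limsup, which equals it. *)
Definition upper_uniform_density (R : realType) (A : nat -> Prop) : R :=
  limn_sup (fun s : nat => max_window R A s / (s%:R : R)).

(* Every positive integer j = 4 (mod 8) has v_2(j) = 2, and 2 is a base-3 digit,
   so j is not in G_3^*.  Hence each window of 8 consecutive integers misses a
   point of G_3^*, a window of length s contains at most s - floor(s/8) of its
   points, and the normalized maximal window counts are at most 7/8 + 1/s. *)

From mathcomp Require Import all_boot all_order all_algebra.
From mathcomp Require Import all_classical all_reals all_analysis.
From mathcomp Require Import zify ring lra.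
Import Order.TTheory GRing.Theory Num.Theory.

Section WindowCount.
Variable A : nat -> Prop.

Lemma window_count_le n s : window_count A n s <= s.
Proof.
apply: (@leq_trans (\sum_(n.+1 <= a < (n + s).+1) 1)).
  by apply: leq_sum => i _; case: asboolP.
by rewrite sum_nat_const_nat muln1; lia.
Qed.

Lemma window_countD n s1 s2 :
  window_count A n (s1 + s2) = window_count A n s1 + window_count A (n + s1) s2.
Proof. by rewrite /window_count (big_cat_nat _ (n := (n + s1).+1)) ?addnA //; lia. Qed.

Lemma window_count_lt n s j :
  n < j <= n + s -> ~ A j -> window_count A n s < s.
Proof.
move=> /andP[nj js] Aj.
have -> : s = (j - n.+1) + (1 + (n + s - j)) by lia.
rewrite !window_countD.
have -> : window_count A (n + (j - n.+1)) 1 = 0.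
  rewrite /window_count (_ : (n + (j - n.+1)).+1 = j); last by lia.
  by rewrite (_ : _ + 1 = j) ?big_nat1; [case: asboolP | lia].
have := window_count_le n (j - n.+1).
have := window_count_le (n + (j - n.+1) + 1) (n + s - j).
lia.
Qed.

Lemma window_count_le_sub_div m :
  (forall n, window_count A n m < m) ->
  forall n s, window_count A n s <= s - s %/ m.
Proof.
move=> Am n s; have m0 : 0 < m by have := Am 0; lia.
suff H q r k : window_count A k (m * q + r) <= (m - 1) * q + r.
  rewrite {1}(divn_eq s m) mulnC; apply: leq_trans (H _ _ _) _.
  rewrite {3}(divn_eq s m) mulnBl mul1n mulnC.
  by rewrite addnBAC // leq_pmulr.
elim: q k => [|q IH] k; first by rewrite !muln0 !add0n window_count_le.
rewrite mulnS -addnA window_countD.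
have := Am k; have := IH (k + m); rewrite mulnS; lia.
Qed.

End WindowCount.

Lemma logn2_mod8_eq4 j : j %% 8 = 4 -> logn 2 j = 2.
Proof.
move=> hj; have -> : j = 4 * (2 * (j %/ 8) + 1) by lia.
rewrite lognM //; last by lia.
rewrite (@logn_coprime 2 (2 * (j %/ 8) + 1)) ?addn0 //.
by rewrite coprime2n addn1 /= oddM.
Qed.

Lemma notin_G3_mod8_eq4 j : j %% 8 = 4 -> ~ inG3 j.
Proof.
move=> hj [j0 Hj]; have d2 : 2 %| j by rewrite (divn_eq j 8) dvdn_addr ?hj ?dvdn_mull.
by have := Hj 2 isT d2 0; rewrite logn2_mod8_eq4.
Qed.

Lemma window_count_G3_lt8 n : window_count inG3 n 8 < 8.
Proof.
apply: (@window_count_lt _ n 8 (n.+1 + (11 - n %% 8) %% 8)); first by lia.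
by apply: notin_G3_mod8_eq4; lia.
Qed.

Local Open Scope ring_scope.
Local Open Scope classical_set_scope.

Section Density.
Variable R : realType.

Lemma max_window_ge0 (A : nat -> Prop) s : 0 <= max_window R A s.
Proof.
apply: (@le_trans _ _ (window_count A 0 s)%:R) => //.
apply: ub_le_sup; last by exists 0%N.
by exists s%:R => _ [n _ <-]; rewrite ler_nat window_count_le.
Qed.

Lemma max_window_le (A : nat -> Prop) s b :
  (forall n, window_count A n s <= b)%N -> max_window R A s <= b%:R.
Proof.
move=> Ab; apply: ge_sup; first by exists (window_count A 0 s)%:R; exists 0%N.
by move=> _ [n _ <-]; rewrite ler_nat.
Qed.

Lemma limn_sup_le_add_inv (u : R^nat) c :
  bounded_fun u -> (forall s, (0 < s)%N -> u s <= c + s%:R^-1) ->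
  limn_sup u <= c.
Proof.
move=> ub uc; rewrite limn_supE //; apply/ler_addgt0Pr => e e0.
pose N := Num.truncn e^-1.
have invN : N.+1%:R^-1 <= e.
  rewrite -[e]invrK lef_pV2 ?posrE ?invr_gt0 ?ltr0n //.
  exact/ltW/truncnS_gt.
apply: (@le_trans _ _ (sups u N.+1)).
  by apply: ge_inf; [exact: bounded_fun_has_lbound_sups | exists N.+1].
rewrite /sups /=; apply: ge_sup; first by exists (u N.+1); exists N.+1 => /=.
move=> _ [k /= Nk <-]; apply: le_trans (uc k _) _; first by lia.
rewrite lerD2l; apply: le_trans invN.
by rewrite lef_pV2 ?posrE ?ltr0n ?ler_nat //; lia.
Qed.

Lemma natr_sub_divn_le (m s : nat) : (0 < m)%N -> (0 < s)%N ->
  (s - s %/ m)%:R / s%:R <= 1 - m%:R^-1 + s%:R^-1 :> R.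
Proof.
move=> m0 s0; rewrite ler_pdivrMr ?ltr0n //.
have hnat : (m * (s - s %/ m) + s <= m * s + m)%N.
  move: (divn_eq s m) (ltn_pmod s m0) (leq_div s m).
  by move: (s %/ m)%N (s %% m)%N => q r; nia.
have mR : 0 < m%:R :> R by rewrite ltr0n.
move: hnat; rewrite -(ler_nat R) !natrD !natrM => h.
rewrite mulrDl mulrBl mul1r mulVf ?gt_eqF ?ltr0n //.
rewrite -(ler_pM2l mR) mulrDr mulrBr mulrA mulfV ?gt_eqF // mul1r.
lra.
Qed.

Lemma upper_uniform_density_le (A : nat -> Prop) m :
  (forall n, window_count A n m < m)%N ->
  upper_uniform_density R A <= 1 - m%:R^-1.
Proof.
move=> Am; have m0 : (0 < m)%N by have := Am 0%N; lia.
have mw_le s : max_window R A s <= (s - s %/ m)%:R.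
  by apply: max_window_le => n; exact: window_count_le_sub_div.
apply: limn_sup_le_add_inv => [|s s0]; last first.
  by apply: le_trans _ (natr_sub_divn_le _ _ m0 s0); rewrite ler_wpM2r ?mw_le.
exists 1; split=> // M M1 s _ /=.
rewrite ger0_norm ?divr_ge0 ?max_window_ge0 //; apply: le_trans (ltW M1).
case: s => [|s]; first by rewrite invr0 mulr0.
rewrite ler_pdivrMr ?ltr0n // mul1r; apply: le_trans (mw_le _) _.
by rewrite ler_nat leq_subr.
Qed.

End Density.

Theorem mainTheorem1 (R : realType) :
  upper_uniform_density R inG3 <= 7 / 8.
Proof.
rewrite (_ : 7 / 8 = 1 - 8%:R^-1); last by field.
exact/upper_uniform_density_le/window_count_G3_lt8.
Qed.
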